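(* Let $\mathfrak g\xrightarrow{\mu}\mathfrak h$ be a crossed module of Lie algebras with action $\mathcal L$, $\phi:W\to V$ linear, and $(\rho_0^1,\rho_0^0,\rho_1)$ a 2-representation on $\phi$. For $k\in\{1,2\}$ let $(\omega_k,\alpha_k,\varphi_k)\in(\bigwedge^2\mathfrak h^*\otimes V)\oplus(\mathfrak h^*\otimes\mathfrak g^*\otimes W)\oplus(\mathfrak g^*\otimes V)$ be triples such that the following data define 2-extensions $E_k$ of $\mathfrak g\xrightarrow{\mu}\mathfrak h$ by $W\xrightarrow{\phi}V$: $\mathfrak e_0=\mathfrak h\oplus V$ with bracket $[(y_0,v_0),(y_1,v_1)]=([y_0,y_1],\rho_0^0(y_0)v_1-\rho_0^0(y_1)v_0-\omega_k(y_0,y_1))$; $\mathfrak e_1=\mathfrak g\oplus W$ with bracket $[(x_0,w_0),(x_1,w_1)]=([x_0,x_1],\rho_0^1(\mu(x_0))w_1-\rho_0^1(\mu(x_1))w_0-\omega_k'(x_0,x_1))$, where $\omega_k'(x_0,x_1)=\rho_1(x_1)\varphi_k(x_0)+\alpha_k(\mu(x_0);x_1)$; structure map $\epsilon_k(x,w)=(\mu(x),\phi(w)+\varphi_k(x))$; action $\mathcal L^{\epsilon_k}_{(y,v)}(x,w)=(\mathcal L_yx,\rho_0^1(y)w-\rho_1(x)v-\alpha_k(y;x))$; with the obvious inclusions and first-coordinate projections. Then $E_1$ and $E_2$ are equivalent if and only if there are linear maps $\lambda_0:\mathfrak h\to V$ and $\lambda_1:\mathfrak g\to W$ with (a) $\omega_2(y_0,y_1)-\omega_1(y_0,y_1)=\rho_0^0(y_0)\lambda_0(y_1)-\rho_0^0(y_1)\lambda_0(y_0)-\lambda_0([y_0,y_1])$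 for all $y_0,y_1\in\mathfrak h$; (b) $\alpha_2(y;x)-\alpha_1(y;x)=\rho_0^1(y)(\lambda_1(x))-\lambda_1(\mathcal L_yx)-\rho_1(x)(\lambda_0(y))$ for all $y\in\mathfrak h$, $x\in\mathfrak g$; (c) $\varphi_2(x)-\varphi_1(x)=\lambda_0(\mu(x))-\phi(\lambda_1(x))$ for all $x\in\mathfrak g$.
   Context: A crossed module of Lie algebras: Lie algebras $\mathfrak g,\mathfrak h$, Lie homomorphism $\mu:\mathfrak g\to\mathfrak h$, Lie homomorphism $\mathcal L:\mathfrak h\to\mathrm{Der}(\mathfrak g)$ with $\mu(\mathcal L_yx)=[y,\mu(x)]$, $\mathcal L_{\mu(x_0)}x_1=[x_0,x_1]$. A morphism of crossed modules is a pair of Lie algebra homomorphisms commuting with structure maps and intertwining actions. $\phi:W\to V$ is regarded as a crossed module with abelian brackets and zero action. 2-representation: linear $\rho_0^1:\mathfrak h\to\mathfrak{gl}(W)$, $\rho_0^0:\mathfrak h\to\mathfrak{gl}(V)$, $\rho_1:\mathfrak g\to\mathrm{Hom}(V,W)$ with $\rho_0^1,\rho_0^0$ representations, $\phi\rho_0^1(y)=\rho_0^0(y)\phi$, $\rho_1([x_0,x_1])=\rho_1(x_0)\phi\rho_1(x_1)-\rho_1(x_1)\phi\rho_1(x_0)$, $\rho_0^0(\mu(x))=\phi\rho_1(x)$, $\rho_0^1(\mu(x))=\rho_1(x)\phi$, $\rho_1(\mathcal L_yx)=\rho_0^1(y)\rho_1(x)-\rho_1(x)\rho_0^0(y)$.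 A 2-extension of $\mathfrak g\xrightarrow{\mu}\mathfrak h$ by $W\xrightarrow{\phi}V$ is a crossed module $\mathfrak e_1\to\mathfrak e_0$ with crossed module morphisms $(W\to V)\to(\mathfrak e_1\to\mathfrak e_0)\to(\mathfrak g\to\mathfrak h)$ giving short exact sequences $0\to W\to\mathfrak e_1\to\mathfrak g\to0$ and $0\to V\to\mathfrak e_0\to\mathfrak h\to0$. Two extensions are equivalent if there is an isomorphism of crossed modules between their middle terms commuting with the inclusions and projections. *)

From HB Require Import structures.
From mathcomp Require Import all_boot all_algebra.
Set Implicit Arguments. Unset Strict Implicit. Unset Printing Implicit Defensive.
Import GRing.Theory.
Local Open Scope ring_scope.

Section Defs.
Variable K : fieldType.

Definition lin (U V : lmodType K) (f : U -> V) : Prop :=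
  forall (a : K) (u v : U), f (a *: u + v) = a *: f u + f v.

Definition bilin (U1 U2 V : lmodType K) (f : U1 -> U2 -> V) : Prop :=
  (forall x, lin (f x)) /\ (forall y, lin (fun x => f x y)).

Record lie_bracket (U : lmodType K) (br : U -> U -> U) : Prop := {
  lb_bilin : bilin br;
  lb_alt : forall x, br x x = 0;
  lb_jacobi : forall x y z, br x (br y z) + br y (br z x) + br z (br x y) = 0 }.

Definition lie_hom (U U' : lmodType K) (br : U -> U -> U) (br' : U' -> U' -> U')
  (f : U -> U') : Prop :=
  lin f /\ forall x y, f (br x y) = br' (f x) (f y).

Definition derivation (U : lmodType K) (br : U -> U -> U) (D : U -> U) : Prop :=
  lin D /\ forall x y, D (br x y) = br (D x) y + br x (D y).

Record crossed_module (G H : lmodType K) (gbr : G -> G -> G) (hbr : H -> H -> H)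
  (mu : G -> H) (L : H -> G -> G) : Prop := {
  cm_g : lie_bracket gbr;
  cm_h : lie_bracket hbr;
  cm_mu : lie_hom gbr hbr mu;
  cm_der : forall y, derivation gbr (L y);
  cm_Llin : forall x, lin (fun y => L y x);
  cm_Lhom : forall y0 y1 x, L (hbr y0 y1) x = L y0 (L y1 x) - L y1 (L y0 x);
  cm_equiv : forall y x, mu (L y x) = hbr y (mu x);
  cm_peiffer : forall x0 x1, L (mu x0) x1 = gbr x0 x1 }.

Record cm_morphism (G H G' H' : lmodType K)
  (gbr : G -> G -> G) (hbr : H -> H -> H) (mu : G -> H) (L : H -> G -> G)
  (gbr' : G' -> G' -> G') (hbr' : H' -> H' -> H') (mu' : G' -> H') (L' : H' -> G' -> G')
  (f1 : G -> G') (f0 : H -> H') : Prop := {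
  cmm_1 : lie_hom gbr gbr' f1;
  cmm_0 : lie_hom hbr hbr' f0;
  cmm_mu : forall x, mu' (f1 x) = f0 (mu x);
  cmm_act : forall y x, f1 (L y x) = L' (f0 y) (f1 x) }.

(* a linear map phi : W -> V regarded as a crossed module *)
Definition abr (U : lmodType K) : U -> U -> U := fun _ _ => 0.
Definition zact (W V : lmodType K) : V -> W -> W := fun _ _ => 0.

Record two_rep (G H W V : lmodType K) (gbr : G -> G -> G) (hbr : H -> H -> H)
  (mu : G -> H) (L : H -> G -> G) (phi : W -> V)
  (r01 : H -> W -> W) (r00 : H -> V -> V) (r1 : G -> V -> W) : Prop := {
  tr_lin01 : bilin r01;
  tr_lin00 : bilin r00;
  tr_lin1 : bilin r1;
  tr_rep01 : forall y0 y1 w, r01 (hbr y0 y1) w = r01 y0 (r01 y1 w) - r01 y1 (r01 y0 w);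
  tr_rep00 : forall y0 y1 v, r00 (hbr y0 y1) v = r00 y0 (r00 y1 v) - r00 y1 (r00 y0 v);
  tr_phi : forall y w, phi (r01 y w) = r00 y (phi w);
  tr_br : forall x0 x1 v,
      r1 (gbr x0 x1) v = r1 x0 (phi (r1 x1 v)) - r1 x1 (phi (r1 x0 v));
  tr_mu0 : forall x v, r00 (mu x) v = phi (r1 x v);
  tr_mu1 : forall x w, r01 (mu x) w = r1 x (phi w);
  tr_L : forall y x v, r1 (L y x) v = r01 y (r1 x v) - r1 x (r00 y v) }.

Record ext_data (W V G H E1 E0 : lmodType K) := ExtData {
  e1br : E1 -> E1 -> E1;
  e0br : E0 -> E0 -> E0;
  eeps : E1 -> E0;
  eact : E0 -> E1 -> E1;
  einc1 : W -> E1;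
  einc0 : V -> E0;
  epr1 : E1 -> G;
  epr0 : E0 -> H }.

Definition exact_at (A B C : lmodType K) (i : A -> B) (p : B -> C) : Prop :=
  [/\ injective i, (forall c, exists b, p b = c)
    & forall b, p b = 0 <-> exists a, i a = b].

Record two_extension (W V G H E1 E0 : lmodType K) (phi : W -> V)
  (gbr : G -> G -> G) (hbr : H -> H -> H) (mu : G -> H) (L : H -> G -> G)
  (D : ext_data W V G H E1 E0) : Prop := {
  te_cm : crossed_module (e1br D) (e0br D) (eeps D) (eact D);
  te_inc : cm_morphism (@abr W) (@abr V) phi (@zact W V)
             (e1br D) (e0br D) (eeps D) (eact D) (einc1 D) (einc0 D);
  te_pr : cm_morphism (e1br D) (e0br D) (eeps D) (eact D)
             gbr hbr mu L (epr1 D) (epr0 D);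
  te_ex1 : exact_at (einc1 D) (epr1 D);
  te_ex0 : exact_at (einc0 D) (epr0 D) }.

Definition ext_equiv (W V G H E1 E0 E1' E0' : lmodType K)
  (D : ext_data W V G H E1 E0) (D' : ext_data W V G H E1' E0') : Prop :=
  exists (F1 : E1 -> E1') (F0 : E0 -> E0'),
    [/\ bijective F1, bijective F0,
        cm_morphism (e1br D) (e0br D) (eeps D) (eact D)
                    (e1br D') (e0br D') (eeps D') (eact D') F1 F0,
        (forall w, F1 (einc1 D w) = einc1 D' w) /\ (forall v, F0 (einc0 D v) = einc0 D' v)
      & (forall e, epr1 D' (F1 e) = epr1 D e) /\ (forall e, epr0 D' (F0 e) = epr0 D e)].

Definition std_ext (G H W V : lmodType K) (gbr : G -> G -> G) (hbr : H -> H -> H)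
  (mu : G -> H) (L : H -> G -> G) (phi : W -> V)
  (r01 : H -> W -> W) (r00 : H -> V -> V) (r1 : G -> V -> W)
  (omega : H -> H -> V) (alpha : H -> G -> W) (varphi : G -> V)
  : ext_data W V G H (G * W)%type (H * V)%type :=
  ExtData
    (fun a b : G * W => (gbr a.1 b.1,
        r01 (mu a.1) b.2 - r01 (mu b.1) a.2
        - (r1 b.1 (varphi a.1) + alpha (mu a.1) b.1)))
    (fun a b : H * V => (hbr a.1 b.1, r00 a.1 b.2 - r00 b.1 a.2 - omega a.1 b.1))
    (fun a : G * W => (mu a.1, phi a.2 + varphi a.1))
    (fun (b : H * V) (a : G * W) => (L b.1 a.1, r01 b.1 a.2 - r1 a.1 b.2 - alpha b.1 a.1))
    (fun w : W => (0 : G, w))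
    (fun v : V => (0 : H, v))
    (fun a : G * W => a.1)
    (fun b : H * V => b.1).

End Defs.

(* An equivalence of two such extensions fixes the included copies of W and V
   and covers the identity of g and h, so it is a pair of shears
   (x, w) |-> (x, w + lam1 x) and (y, v) |-> (y, v + lam0 y).  Each structure
   map of E_k is the untwisted one corrected by a cochain (omega_k for the
   bracket of h + V, omega'_k(x0, x1) = rho1(x1) varphi_k(x0) + alpha_k(mu x0; x1)
   for the bracket of g + W, alpha_k for the action, varphi_k for the structure
   map), and a shear intertwines two corrections exactly when their difference
   is the coboundary of the shear.  This gives (a), (b) and (c) directly; for
   the bracket of g + W the coboundary condition follows from (b) and (c) via
   the Peiffer identity and rho0^1(mu x) = rho1(x) phi.  The argument never
   uses that the E_k are 2-extensions. *)

From mathcomp Require Import all_boot all_algebra.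
Set Implicit Arguments. Unset Strict Implicit. Unset Printing Implicit Defensive.
Import GRing.Theory.
Local Open Scope ring_scope.

Section AbelianIdentities.
Variable Z : zmodType.

Lemma twist_eq (a b c1 c2 d p q : Z) :
  (a - b - c1 + d = (a + p) - (b + q) - c2) <-> (c2 - c1 = p - q - d).
Proof.
have -> : a + p - (b + q) - c2 = a - b + (p - q - c2).
  by rewrite opprD addrACA !addrA.
rewrite -[a - b - c1 + d]addrA; split=> [/addrI E | E]; last congr (_ + _).
- have -> : p - q = - c1 + d + c2 by rewrite E subrK.
  by rewrite addrAC addrK addrC.
- have -> : p - q = - c1 + c2 + d by rewrite [- c1 + c2]addrC E subrK.
  by rewrite addrAC addrK.
Qed.

Lemma shift_eq (x m l t1 t2 : Z) :
  (x + m + t2 = x + t1 + l) <-> (t2 - t1 = l - m).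
Proof.
rewrite -!addrA; split=> [/addrI E | E]; last congr (_ + _).
- by rewrite -(addKr m t2) E addrCA [t1 + _]addrC addrK addrC.
- by rewrite -(subrK t1 t2) E addrCA subrKA addrC.
Qed.

End AbelianIdentities.

Section Linear.
Variables (K : fieldType) (U U' : lmodType K).
Implicit Types f g : U -> U'.

Lemma linD f : lin f -> forall u v, f (u + v) = f u + f v.
Proof. by move=> f_lin u v; rewrite -{1}[u]scale1r f_lin scale1r. Qed.

Lemma linB f : lin f -> forall u v, f (u - v) = f u - f v.
Proof. by move=> f_lin u v; apply/eqP; rewrite eq_sym subr_eq -(linD f_lin) subrK. Qed.

Lemma lin0 f : lin f -> f 0 = 0.
Proof. by move=> f_lin; rewrite -(subrr (0 : U)) (linB f_lin) subrr. Qed.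

Lemma eq_lin f g : f =1 g -> lin f -> lin g.
Proof. by move=> fg f_lin a u v; rewrite -!fg. Qed.

Lemma eq_lie_hom (br : U -> U -> U) (br' : U' -> U' -> U') f g :
  f =1 g -> lie_hom br br' f -> lie_hom br br' g.
Proof.
move=> fg [f_lin f_br]; split; first exact: eq_lin f_lin.
by move=> x y; rewrite -!fg.
Qed.

End Linear.

Lemma eq_cm_morphism (K : fieldType) (G H G' H' : lmodType K)
    (gbr : G -> G -> G) (hbr : H -> H -> H) (mu : G -> H) (L : H -> G -> G)
    (gbr' : G' -> G' -> G') (hbr' : H' -> H' -> H') (mu' : G' -> H')
    (L' : H' -> G' -> G') (f1 g1 : G -> G') (f0 g0 : H -> H') :
  f1 =1 g1 -> f0 =1 g0 ->
  cm_morphism gbr hbr mu L gbr' hbr' mu' L' f1 f0 ->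
  cm_morphism gbr hbr mu L gbr' hbr' mu' L' g1 g0.
Proof.
move=> e1 e0 [f1_hom f0_hom f_mu f_act]; split.
- exact: eq_lie_hom f1_hom.
- exact: eq_lie_hom f0_hom.
- by move=> x; rewrite -e1 -e0.
- by move=> y x; rewrite -!e1 -e0.
Qed.

Section Shear.
Variables (K : fieldType) (A B : lmodType K).
Implicit Types (lam : A -> B) (F : A * B -> A * B).

Definition shear lam (p : A * B) : A * B := (p.1, p.2 + lam p.1).

Lemma shear_bij lam : bijective (shear lam).
Proof.
exists (shear (fun a => - lam a)) => -[a b]; first by rewrite /shear /= addrK.
by rewrite /shear /= subrK.
Qed.

Lemma shear_lin lam : lin lam -> lin (shear lam).
Proof.
move=> lam_lin k [a b] [a' b']; congr (_, _) => /=.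
by rewrite lam_lin scalerDr addrACA.
Qed.

Lemma shear_inr lam : lin lam -> forall b, shear lam (0, b) = (0, b).
Proof. by move=> lam_lin b; rewrite /shear /= (lin0 lam_lin) addr0. Qed.

Lemma lin_snd_inl F : lin F -> lin (fun a => (F (a, 0)).2).
Proof.
move=> F_lin k a a' /=.
have -> : (k *: a + a', 0 : B) = k *: (a, 0) + (a', 0).
  by congr (_, _); rewrite /= scaler0 addr0.
by rewrite F_lin.
Qed.

Lemma shear_eq F :
    lin F -> (forall b, F (0, b) = (0, b)) -> (forall p, (F p).1 = p.1) ->
  F =1 shear (fun a => (F (a, 0)).2).
Proof.
move=> F_lin F_inr F_fst [a b].
have -> : F (a, b) = F (a, 0) + (0, b).
  by rewrite -F_inr -(linD F_lin); congr F; congr (_, _); rewrite /= ?addr0 ?add0r.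
rewrite /shear /=; case E : (F (a, 0)) => [a' c] /=.
have -> : a' = a by have := F_fst (a, 0); rewrite E.
by congr (_, _); rewrite /= ?addr0 // addrC.
Qed.

End Shear.

(* [e0br], [e1br] and [eact] of [std_ext] are convertible to instances of
   [twisted], and [eeps] to an instance of [twisted_map]. *)
Section Twisted.
Variables (K : fieldType) (A A' B B' : lmodType K).

Definition twisted (s : A -> A' -> A') (rho : A -> B' -> B')
    (sigma : A' -> B -> B') (c : A -> A' -> B') (p : A * B) (q : A' * B') :
  A' * B' := (s p.1 q.1, rho p.1 q.2 - sigma q.1 p.2 - c p.1 q.1).

Definition twisted_map (f : A -> A') (g : B -> B') (t : A -> B') (p : A * B) :
  A' * B' := (f p.1, g p.2 + t p.1).

Lemma shear_twistedP s rho sigma c1 c2 (lam : A -> B) (lam' : A' -> B') :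
    (forall a, lin (rho a)) -> (forall a', lin (sigma a')) ->
  (forall p q, shear lam' (twisted s rho sigma c1 p q)
               = twisted s rho sigma c2 (shear lam p) (shear lam' q)) <->
  (forall a a', c2 a a' - c1 a a'
                = rho a (lam' a') - sigma a' (lam a) - lam' (s a a')).
Proof.
move=> rho_lin sigma_lin.
have pointwise a b a' b' :
    shear lam' (twisted s rho sigma c1 (a, b) (a', b'))
      = twisted s rho sigma c2 (shear lam (a, b)) (shear lam' (a', b')) <->
    c2 a a' - c1 a a' = rho a (lam' a') - sigma a' (lam a) - lam' (s a a').
  rewrite /shear /twisted /= (linD (rho_lin a)) (linD (sigma_lin a')).
  by split=> [[] /twist_eq | /twist_eq ->].
split=> [E a a' | E [a b] [a' b']]; apply/pointwise; last exact: E.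
exact: (E (a, 0) (a', 0)).
Qed.

Lemma shear_twisted_mapP f g t1 t2 (lam : A -> B) (lam' : A' -> B') : lin g ->
  (forall p, twisted_map f g t2 (shear lam p) = shear lam' (twisted_map f g t1 p))
  <-> (forall a, t2 a - t1 a = lam' (f a) - g (lam a)).
Proof.
move=> g_lin.
have pointwise a b :
    twisted_map f g t2 (shear lam (a, b)) = shear lam' (twisted_map f g t1 (a, b))
    <-> t2 a - t1 a = lam' (f a) - g (lam a).
  rewrite /shear /twisted_map /= (linD g_lin).
  by split=> [[] /shift_eq | /shift_eq ->].
split=> [E a | E [a b]]; apply/pointwise; last exact: E.
exact: (E (a, 0)).
Qed.

End Twisted.

Section StandardExtension.
Context {K : fieldType} {G H W V : lmodType K}.
Context {gbr : G -> G -> G} {hbr : H -> H -> H} {mu : G -> H} {L : H -> G -> G}.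
Context {phi : W -> V} {r01 : H -> W -> W} {r00 : H -> V -> V} {r1 : G -> V -> W}.
Hypotheses (CM : crossed_module gbr hbr mu L) (phi_lin : lin phi)
  (TR : two_rep gbr hbr mu L phi r01 r00 r1).
Context {omega1 omega2 : H -> H -> V} {alpha1 alpha2 : H -> G -> W}.
Context {varphi1 varphi2 : G -> V} {lam0 : H -> V} {lam1 : G -> W}.

Let r01_lin : forall y, lin (r01 y) := (tr_lin01 TR).1.
Let r00_lin : forall y, lin (r00 y) := (tr_lin00 TR).1.
Let r1_lin : forall x, lin (r1 x) := (tr_lin1 TR).1.

Local Notation E1 := (std_ext gbr hbr mu L phi r01 r00 r1 omega1 alpha1 varphi1).
Local Notation E2 := (std_ext gbr hbr mu L phi r01 r00 r1 omega2 alpha2 varphi2).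

Definition omega_coboundary :=
  forall y0 y1, omega2 y0 y1 - omega1 y0 y1
                = r00 y0 (lam0 y1) - r00 y1 (lam0 y0) - lam0 (hbr y0 y1).

Definition alpha_coboundary :=
  forall y x, alpha2 y x - alpha1 y x
              = r01 y (lam1 x) - lam1 (L y x) - r1 x (lam0 y).

Definition varphi_coboundary :=
  forall x, varphi2 x - varphi1 x = lam0 (mu x) - phi (lam1 x).

Lemma std_e0br_shearP :
  (forall p q, shear lam0 (e0br E1 p q) = e0br E2 (shear lam0 p) (shear lam0 q))
  <-> omega_coboundary.
Proof. exact: shear_twistedP. Qed.

Lemma std_eact_shearP :
  (forall p q, shear lam1 (eact E1 p q) = eact E2 (shear lam0 p) (shear lam1 q))
  <-> alpha_coboundary.
Proof.
apply: iff_trans (shear_twistedP _ _ _ _ _ r01_lin r1_lin) _.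
by split=> E y x; rewrite E addrAC.
Qed.

Lemma std_eeps_shearP :
  (forall p, eeps E2 (shear lam1 p) = shear lam0 (eeps E1 p)) <-> varphi_coboundary.
Proof. exact: shear_twisted_mapP. Qed.

Definition omega_prime (alpha : H -> G -> W) (varphi : G -> V) x0 x1 :=
  r1 x1 (varphi x0) + alpha (mu x0) x1.

Lemma std_e1br_shear : alpha_coboundary -> varphi_coboundary ->
  forall p q, shear lam1 (e1br E1 p q) = e1br E2 (shear lam1 p) (shear lam1 q).
Proof.
move=> alpha_cob varphi_cob.
have mu_r01_lin x : lin (r01 (mu x)) := r01_lin (mu x).
apply/(shear_twistedP gbr (omega_prime alpha1 varphi1) (omega_prime alpha2 varphi2)
         lam1 lam1 mu_r01_lin mu_r01_lin) => x0 x1.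
rewrite /omega_prime opprD addrACA -(linB (r1_lin x1)) varphi_cob alpha_cob.
rewrite (linB (r1_lin x1)) -(tr_mu1 TR) (cm_peiffer CM).
by rewrite addrC subrKA addrAC.
Qed.

Lemma std_shear_morphismP : lin lam0 -> lin lam1 ->
  cm_morphism (e1br E1) (e0br E1) (eeps E1) (eact E1)
              (e1br E2) (e0br E2) (eeps E2) (eact E2) (shear lam1) (shear lam0)
  <-> [/\ omega_coboundary, alpha_coboundary & varphi_coboundary].
Proof.
move=> lam0_lin lam1_lin; split=> [[[_ _] [_ br0_hom] eps_hom act_hom] | ].
  by split; [apply/std_e0br_shearP | apply/std_eact_shearP | apply/std_eeps_shearP].
case=> omega_cob alpha_cob varphi_cob; split.
- by split; [exact: shear_lin | exact: std_e1br_shear].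
- by split; [exact: shear_lin | exact/std_e0br_shearP].
- exact/std_eeps_shearP.
- exact/std_eact_shearP.
Qed.

End StandardExtension.

Theorem mainTheorem17 (K : fieldType) (G H W V : lmodType K)
  (gbr : G -> G -> G) (hbr : H -> H -> H) (mu : G -> H) (L : H -> G -> G)
  (phi : W -> V) (r01 : H -> W -> W) (r00 : H -> V -> V) (r1 : G -> V -> W)
  (omega1 omega2 : H -> H -> V) (alpha1 alpha2 : H -> G -> W)
  (varphi1 varphi2 : G -> V) :
  crossed_module gbr hbr mu L ->
  lin phi ->
  two_rep gbr hbr mu L phi r01 r00 r1 ->
  bilin omega1 -> (forall y, omega1 y y = 0) ->
  bilin omega2 -> (forall y, omega2 y y = 0) ->
  bilin alpha1 -> bilin alpha2 ->
  lin varphi1 -> lin varphi2 ->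
  two_extension phi gbr hbr mu L
    (std_ext gbr hbr mu L phi r01 r00 r1 omega1 alpha1 varphi1) ->
  two_extension phi gbr hbr mu L
    (std_ext gbr hbr mu L phi r01 r00 r1 omega2 alpha2 varphi2) ->
  (ext_equiv (std_ext gbr hbr mu L phi r01 r00 r1 omega1 alpha1 varphi1)
             (std_ext gbr hbr mu L phi r01 r00 r1 omega2 alpha2 varphi2)
   <->
   exists (lam0 : H -> V) (lam1 : G -> W),
     [/\ lin lam0, lin lam1,
       (forall y0 y1, omega2 y0 y1 - omega1 y0 y1
          = r00 y0 (lam0 y1) - r00 y1 (lam0 y0) - lam0 (hbr y0 y1)),
       (forall y x, alpha2 y x - alpha1 y x
          = r01 y (lam1 x) - lam1 (L y x) - r1 x (lam0 y))
     & (forall x, varphi2 x - varphi1 x = lam0 (mu x) - phi (lam1 x))]).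
Proof.
move=> CM phi_lin TR _ _ _ _ _ _ _ _ _ _; split.
- case=> F1 [F0 [_ _ F_morph [F1_inr F0_inr] [F1_fst F0_fst]]].
  have [[F1_lin _] [F0_lin _] _ _] := F_morph.
  have lam0_lin := lin_snd_inl F0_lin; have lam1_lin := lin_snd_inl F1_lin.
  exists (fun y => (F0 (y, 0)).2), (fun x => (F1 (x, 0)).2).
  have shear_morph := eq_cm_morphism (shear_eq F1_lin F1_inr F1_fst)
                                     (shear_eq F0_lin F0_inr F0_fst) F_morph.
  have [omega_cob alpha_cob varphi_cob] :=
    (std_shear_morphismP CM phi_lin TR lam0_lin lam1_lin).1 shear_morph.
  by split.
- case=> lam0 [lam1 [lam0_lin lam1_lin omega_cob alpha_cob varphi_cob]].
  exists (shear lam1), (shear lam0); split; try exact: shear_bij.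
  + exact/(std_shear_morphismP CM phi_lin TR lam0_lin lam1_lin).
  + by split; apply: shear_inr.
  + by [].
Qed.
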